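(* Let $\sigma:\mathbb{R}\to\mathbb{R}$ be an increasing odd homeomorphism. If $p\in X_+=\{(x,y)\in\mathbb{R}^2:x>0,\ y\geq0\}$ is $\sigma$-irrational, then $\bigcup_{n\geq0}\bigcup_{k\geq0}E_\sigma^{-n}\big(\{E_\sigma^k(p)\}\big)$ is dense in $X_+$.
   Context: $h_\sigma(x,y)=(x+\sigma^{-1}(y),y)$, $v_\sigma(x,y)=(x,\sigma(x)+y)$. Let $\Omega=\mathbb{R}^2\setminus\{(0,0)\}$, $X=\{(x,y)\in\Omega:xy\geq0,\ x\neq0\}$, $Y=\{(x,y)\in\Omega:xy\leq0,\ y\neq0\}$, and $A=h_\sigma(X)$, $B=v_\sigma(X)$, $C=h_\sigma^{-1}(Y)$, $D=v_\sigma^{-1}(Y)$ (these partition $\Omega$). The generalized Euclidean algorithm $E_\sigma:\Omega\to\Omega$ is $E_\sigma=h_\sigma^{-1}$ on $A$, $v_\sigma^{-1}$ on $B$, $h_\sigma$ on $C$, $v_\sigma$ on $D$; $E_\sigma^{-n}(S)$ is the preimage under the $n$-th iterate. The $\sigma$-rational lines are the axes $Ox,Oy$, the sets $m(Ox)$ with $m$ in the monoid generated by $h_\sigma,v_\sigma$, and the sets $m(Oy)$ with $m$ in the monoid generated by $h_\sigma^{-1},v_\sigma^{-1}$; a point is $\sigma$-irrational if it lies on none of them. *)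

From Stdlib Require Import Reals Lra Classical ClassicalEpsilon.
Open Scope R_scope.

Definition pt := (R * R)%type.

(* sigma : R -> R is an increasing odd homeomorphism; its inverse is passed
   explicitly as [si] (the inverse of a bijection is unique). *)
Definition is_homeo (s si : R -> R) : Prop :=
  continuity s /\ continuity si /\
  (forall x, si (s x) = x) /\ (forall y, s (si y) = y).

Definition strictly_increasing (s : R -> R) : Prop :=
  forall x y, x < y -> s x < s y.

Definition odd_fun (s : R -> R) : Prop := forall x, s (- x) = - s x.

Definition hs (s si : R -> R) (p : pt) : pt := (fst p + si (snd p), snd p).
Definition vs (s si : R -> R) (p : pt) : pt := (fst p, s (fst p) + snd p).
Definition hs_inv (s si : R -> R) (p : pt) : pt := (fst p - si (snd p), snd p).
Definition vs_inv (s si : R -> R) (p : pt) : pt := (fst p, snd p - s (fst p)).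

Definition inOmega (p : pt) : Prop := p <> (0, 0).
Definition inX (p : pt) : Prop :=
  inOmega p /\ fst p * snd p >= 0 /\ fst p <> 0.
Definition inY (p : pt) : Prop :=
  inOmega p /\ fst p * snd p <= 0 /\ snd p <> 0.

(* A = h(X), B = v(X), C = h^{-1}(Y), D = v^{-1}(Y), as membership tests
   through the inverse maps *)
Definition inA s si (p : pt) : Prop := inX (hs_inv s si p).
Definition inB s si (p : pt) : Prop := inX (vs_inv s si p).
Definition inC s si (p : pt) : Prop := inY (hs s si p).
Definition inD s si (p : pt) : Prop := inY (vs s si p).

Definition decP (P : Prop) : bool :=
  if excluded_middle_informative P then true else false.

(* The generalized Euclidean algorithm E_sigma.  It is only meaningful on
   Omega (where A,B,C,D partition); outside (i.e. at the origin) it is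
   extended by the identity. *)
Definition Esig (s si : R -> R) (p : pt) : pt :=
  if decP (inA s si p) then hs_inv s si p
  else if decP (inB s si p) then vs_inv s si p
  else if decP (inC s si p) then hs s si p
  else if decP (inD s si p) then vs s si p
  else p.

Definition Eiter (s si : R -> R) (n : nat) (p : pt) : pt := Nat.iter n (Esig s si) p.

(* Words in the monoid generated by two maps: true = first generator. *)
Fixpoint word_apply (f g : pt -> pt) (w : list bool) (p : pt) : pt :=
  match w with
  | nil => p
  | cons b w' => (if b then f else g) (word_apply f g w' p)
  end.

Definition onOx (p : pt) : Prop := snd p = 0.
Definition onOy (p : pt) : Prop := fst p = 0.

Definition on_rational_line (s si : R -> R) (p : pt) : Prop :=
  onOx p \/ onOy p \/
  (exists (w : list bool) (q : pt), onOx q /\ p = word_apply (hs s si) (vs s si) w q) \/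
  (exists (w : list bool) (q : pt), onOy q /\ p = word_apply (hs_inv s si) (vs_inv s si) w q).

Definition sigma_irrational (s si : R -> R) (p : pt) : Prop :=
  ~ on_rational_line s si p.

Definition inXplus (p : pt) : Prop := fst p > 0 /\ snd p >= 0.

Definition dist2 (p q : pt) : R :=
  sqrt ((fst p - fst q) ^ 2 + (snd p - snd q) ^ 2).

Definition backward_orbit_set (s si : R -> R) (p : pt) (r : pt) : Prop :=
  exists n k : nat, Eiter s si n r = Eiter s si k p.

Definition dense_in_Xplus (S : pt -> Prop) : Prop :=
  forall q, inXplus q -> forall eps, eps > 0 ->
    exists r, S r /\ inXplus r /\ dist2 q r < eps.

From Stdlib Require Import Reals Lra Lia List Classical ClassicalEpsilon.
Open Scope R_scope.

(* On X_+ the map E_sigma is h^-1 below the graph of sigma and v^-1 on or above it, so it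
   decreases both coordinates, and E_sigma^|w| undoes every word w in h, v.  The orbit of a
   sigma-irrational p never meets the x-axis and therefore tends to the origin, since a
   coordinate bounded away from 0 would make the other one decrease by a fixed amount
   infinitely often.  Applying powers of h to an orbit point near the origin approaches any
   (t, 0) with t > 0, so by continuity every point word(t, 0) is a limit of the set.  Such
   points are dense: the orbits of two points w1 (north-west) and w2 (south-east) near a
   target cannot follow the same branches forever, because each common step widens one of
   their gaps by a uniform amount; at the first split the intermediate value theorem along
   [w1, w2] yields a point whose image lies on the graph of sigma, i.e. equals v(t, 0). *)

Lemma continuity_eps_delta (f : R -> R) x e : continuity f -> 0 < e ->
  exists d, 0 < d /\ forall y, Rabs (y - x) < d -> Rabs (f y - f x) < e.
Proof.
  intros f_cont e_pos. destruct (f_cont x e e_pos) as [d [d_pos Hd]].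
  exists d; split; [exact d_pos|]. intros y Hy.
  destruct (Req_dec x y) as [<-|x_neq_y].
  - rewrite Rminus_diag, Rabs_R0; exact e_pos.
  - exact (Hd y (conj (conj I x_neq_y) Hy)).
Qed.

Lemma strictly_increasing_le (f : R -> R) x y :
  strictly_increasing f -> x <= y -> f x <= f y.
Proof. intros f_inc [lt_xy | <-]; [left; apply f_inc, lt_xy | right; reflexivity]. Qed.

Lemma uniform_increment (f : R -> R) h Y :
  continuity f -> strictly_increasing f -> 0 < h ->
  exists c, 0 < c /\ forall a, 0 <= a <= Y -> c <= f (a + h) - f a.
Proof.
  intros f_cont f_inc h_pos.
  set (incr a := f (a + h) - f a).
  assert (incr_pos : forall a, 0 < incr a) by (intro a; unfold incr; pose proof (f_inc a (a + h)); lra).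
  destruct (Rle_dec 0 Y) as [Y_nonneg | Y_neg].
  - destruct (continuity_ab_min incr 0 Y Y_nonneg) as [m [m_min _]].
    { intros c _. unfold incr. reg; apply f_cont. }
    exists (incr m); split; [apply incr_pos | exact m_min].
  - exists 1; split; [lra|]. intros a Ha; lra.
Qed.

Lemma nat_multiple_bracket t c : 0 <= t -> 0 < c ->
  exists n : nat, INR n * c <= t < INR n * c + c.
Proof.
  intros t_nonneg c_pos. destruct (INR_unbounded (t / c)) as [N HN].
  assert (t_lt : t < INR N * c).
  { apply (Rmult_lt_compat_r c) in HN; [|exact c_pos].
    unfold Rdiv in HN; rewrite Rmult_assoc, Rinv_l in HN; lra. }
  clear HN. induction N as [|N IH]; [simpl in t_lt; lra|].
  rewrite S_INR in t_lt. destruct (Rlt_dec t (INR N * c)) as [lt | ge].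
  - exact (IH lt).
  - exists N; lra.
Qed.

Lemma dist2_le_abs_sum u v :
  dist2 u v <= Rabs (fst u - fst v) + Rabs (snd u - snd v).
Proof.
  unfold dist2. set (a := fst u - fst v); set (b := snd u - snd v).
  pose proof (Rabs_pos a); pose proof (Rabs_pos b).
  rewrite <- (sqrt_pow2 (Rabs a + Rabs b)) by lra.
  apply sqrt_le_1_alt. rewrite <- (pow2_abs a), <- (pow2_abs b). nra.
Qed.

Section EuclideanSequences.
Variables (f g : R -> R) (a b : nat -> R).
Hypothesis f_inc : strictly_increasing f.
Hypothesis f_pos : forall x, 0 < x -> 0 < f x.
Hypothesis g_pos : forall y, 0 < y -> 0 < g y.
Hypothesis a_pos : forall k, 0 < a k.
Hypothesis b_pos : forall k, 0 < b k.
Hypothesis euclid_step : forall k,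
  (a (S k) = a k - g (b k) /\ b (S k) = b k) \/ (a (S k) = a k /\ b (S k) = b k - f (a k)).

Lemma euclid_decreasing_fst : Un_decreasing a.
Proof.
  intro k. destruct (euclid_step k) as [[-> _] | [-> _]]; [|lra].
  pose proof (g_pos _ (b_pos k)); lra.
Qed.

Lemma euclid_decreasing_snd : Un_decreasing b.
Proof.
  intro k. destruct (euclid_step k) as [[_ ->] | [_ ->]]; [lra|].
  pose proof (f_pos _ (a_pos k)); lra.
Qed.

Lemma euclid_fst_eventually_below d : 0 < d ->
  exists N, forall k, (N <= k)%nat -> a k < d.
Proof.
  intros d_pos.
  enough (exists N, a N < d) as [N HN].
  { exists N; intros k Hk. pose proof (decreasing_prop a N k euclid_decreasing_fst Hk); lra. }
  apply NNPP; intro never_below.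
  assert (a_ge : forall k, d <= a k)
    by (intro k; apply Rnot_lt_le; intro; apply never_below; exists k; assumption).
  assert (b_cauchy : Cauchy_crit b).
  { apply CV_Cauchy, decreasing_cv; [exact euclid_decreasing_snd|].
    exists 0; intros x [k ->]; unfold opp_seq; pose proof (b_pos k); lra. }
  destruct (b_cauchy (f d) (f_pos d d_pos)) as [N HN].
  (* once b has settled within f d, no more steps of the second kind happen *)
  assert (a_drift : forall n, a (n + N)%nat = a N - INR n * g (b N) /\ b (n + N)%nat = b N).
  { induction n as [|n [IHa IHb]]; [simpl; split; ring|].
    simpl plus. destruct (euclid_step (n + N)) as [[Ha Hb] | [Ha Hb]].
    - rewrite Ha, Hb, IHa, IHb, S_INR; split; ring.
    - exfalso. specialize (HN (S (n + N)) (n + N)%nat ltac:(lia) ltac:(lia)).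
      unfold Rdist in HN. rewrite Hb in HN.
      replace (b (n + N)%nat - f (a (n + N)%nat) - b (n + N)%nat) with (- f (a (n + N)%nat))
        in HN by ring.
      rewrite Rabs_Ropp, Rabs_pos_eq in HN by (left; apply f_pos, a_pos).
      pose proof (strictly_increasing_le f _ _ f_inc (a_ge (n + N)%nat)); lra. }
  pose proof (g_pos _ (b_pos N)) as gN_pos.
  destruct (INR_unbounded (a N / g (b N))) as [n Hn].
  apply (Rmult_lt_compat_r (g (b N))) in Hn; [|exact gN_pos].
  unfold Rdiv in Hn; rewrite Rmult_assoc, Rinv_l in Hn by lra.
  destruct (a_drift n) as [Ha _]. pose proof (a_pos (n + N)%nat); lra.
Qed.

End EuclideanSequences.

Definition plane_continuous (F : pt -> pt) : Prop :=
  forall u e, 0 < e -> exists d, 0 < d /\ forall v,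
    Rabs (fst v - fst u) < d -> Rabs (snd v - snd u) < d ->
    Rabs (fst (F v) - fst (F u)) < e /\ Rabs (snd (F v) - snd (F u)) < e.

Lemma plane_continuous_id : plane_continuous (fun u => u).
Proof. intros u e e_pos. exists e; split; [exact e_pos | tauto]. Qed.

Lemma plane_continuous_comp F G :
  plane_continuous F -> plane_continuous G -> plane_continuous (fun u => F (G u)).
Proof.
  intros F_cont G_cont u e e_pos.
  destruct (F_cont (G u) e e_pos) as [d1 [d1_pos H1]].
  destruct (G_cont u d1 d1_pos) as [d2 [d2_pos H2]].
  exists d2; split; [exact d2_pos|]. intros v Hx Hy.
  destruct (H2 v Hx Hy); apply H1; assumption.
Qed.

Lemma plane_continuous_hshear (g : R -> R) :
  continuity g -> plane_continuous (fun u => (fst u + g (snd u), snd u)).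
Proof.
  intros g_cont u e e_pos.
  destruct (continuity_eps_delta g (snd u) (e / 2) g_cont ltac:(lra)) as [d [d_pos Hg]].
  exists (Rmin (e / 2) d); split; [apply Rmin_pos; lra|].
  intros v Hx Hy. pose proof (Rmin_l (e / 2) d); pose proof (Rmin_r (e / 2) d).
  simpl; split; [|lra].
  replace (fst v + g (snd v) - (fst u + g (snd u)))
    with ((fst v - fst u) + (g (snd v) - g (snd u))) by ring.
  pose proof (Rabs_triang (fst v - fst u) (g (snd v) - g (snd u))).
  pose proof (Hg (snd v) ltac:(lra)); lra.
Qed.

Lemma plane_continuous_vshear (g : R -> R) :
  continuity g -> plane_continuous (fun u => (fst u, g (fst u) + snd u)).
Proof.
  intros g_cont u e e_pos.
  destruct (continuity_eps_delta g (fst u) (e / 2) g_cont ltac:(lra)) as [d [d_pos Hg]].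
  exists (Rmin (e / 2) d); split; [apply Rmin_pos; lra|].
  intros v Hx Hy. pose proof (Rmin_l (e / 2) d); pose proof (Rmin_r (e / 2) d).
  simpl; split; [lra|].
  replace (g (fst v) + snd v - (g (fst u) + snd u))
    with ((g (fst v) - g (fst u)) + (snd v - snd u)) by ring.
  pose proof (Rabs_triang (g (fst v) - g (fst u)) (snd v - snd u)).
  pose proof (Hg (fst v) ltac:(lra)); lra.
Qed.

Definition path_continuous (gamma : R -> pt) : Prop :=
  continuity (fun l => fst (gamma l)) /\ continuity (fun l => snd (gamma l)).

Definition segment (u v : pt) (l : R) : pt :=
  (fst u + l * (fst v - fst u), snd u + l * (snd v - snd u)).

Lemma path_continuous_segment u v : path_continuous (segment u v).
Proof. split; intro l; simpl; reg. Qed.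

Lemma decP_true (P : Prop) : P -> decP P = true.
Proof. unfold decP. destruct (excluded_middle_informative P); tauto. Qed.

Lemma decP_false (P : Prop) : ~ P -> decP P = false.
Proof. unfold decP. destruct (excluded_middle_informative P); tauto. Qed.

Definition gap_sum (v v' : pt) : R := (fst v' - fst v) + (snd v - snd v').

Section GeneralizedEuclid.
Variables s si : R -> R.
Hypothesis s_cont : continuity s.
Hypothesis si_cont : continuity si.
Hypothesis si_s : forall x, si (s x) = x.
Hypothesis s_si : forall y, s (si y) = y.
Hypothesis s_inc : strictly_increasing s.
Hypothesis s0 : s 0 = 0.

Lemma si_inc : strictly_increasing si.
Proof.
  intros x y lt_xy. destruct (Rlt_le_dec (si x) (si y)) as [lt | ge]; [exact lt|].
  apply (strictly_increasing_le s _ _ s_inc) in ge. rewrite !s_si in ge. lra.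
Qed.

Lemma si0 : si 0 = 0.
Proof. rewrite <- s0 at 1. apply si_s. Qed.

Lemma s_pos x : 0 < x -> 0 < s x.
Proof. intro. rewrite <- s0. apply s_inc; assumption. Qed.

Lemma si_pos y : 0 < y -> 0 < si y.
Proof. intro. rewrite <- si0. apply si_inc; assumption. Qed.

Lemma si_nonneg y : 0 <= y -> 0 <= si y.
Proof. intro. rewrite <- si0. apply strictly_increasing_le; [exact si_inc | assumption]. Qed.

Definition is_hstep (u : pt) : bool :=
  if Rlt_dec (snd u) (s (fst u)) then true else false.

Definition inv_step (b : bool) : pt -> pt := if b then hs_inv s si else vs_inv s si.

Lemma is_hstepP u : if is_hstep u then snd u < s (fst u) else s (fst u) <= snd u.
Proof. unfold is_hstep. destruct (Rlt_dec _ _); lra. Qed.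

Lemma Esig_Xplus u : inXplus u -> Esig s si u = inv_step (is_hstep u) u.
Proof.
  destruct u as [x y]; intros [x_pos y_nonneg]. pose proof (is_hstepP (x, y)) as Hb.
  unfold Esig, inA, inB, inX, inOmega, hs_inv, vs_inv in *; simpl in *.
  destruct (is_hstep (x, y)).
  - assert (si y < x) by (rewrite <- (si_s x); apply si_inc; assumption).
    rewrite decP_true; [reflexivity|].
    split; [intro E; injection E; lra|]. split; [apply Rle_ge, Rmult_le_pos|]; lra.
  - assert (x <= si y) by (rewrite <- (si_s x); apply strictly_increasing_le; [exact si_inc|lra]).
    pose proof (s_pos x x_pos).
    rewrite decP_false, decP_true; [reflexivity| |].
    + split; [intro E; injection E; lra|]. split; [apply Rle_ge, Rmult_le_pos|]; lra.
    + intros [_ [prod_nonneg x_neq]]. assert (x - si y < 0) by lra.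
      assert ((x - si y) * y < 0) by (apply Rmult_neg_pos; lra). lra.
Qed.

Lemma Esig_Xplus_decreasing u : inXplus u ->
  inXplus (Esig s si u) /\ fst (Esig s si u) <= fst u /\ snd (Esig s si u) <= snd u.
Proof.
  intro u_X. rewrite (Esig_Xplus u u_X). pose proof (is_hstepP u) as Hb.
  destruct u as [x y], u_X as [x_pos y_nonneg].
  unfold inXplus, inv_step, hs_inv, vs_inv in *; simpl in *.
  destruct (is_hstep (x, y)); simpl.
  - assert (si y < x) by (rewrite <- (si_s x); apply si_inc; assumption).
    pose proof (si_nonneg y ltac:(lra)); lra.
  - pose proof (s_pos x x_pos); lra.
Qed.

Lemma Eiter_Xplus_decreasing n u : inXplus u ->
  inXplus (Eiter s si n u) /\ fst (Eiter s si n u) <= fst u /\ snd (Eiter s si n u) <= snd u.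
Proof.
  intro u_X. induction n as [|n [IH_X [IHx IHy]]]; [split; [exact u_X | simpl; lra]|].
  change (Eiter s si (S n) u) with (Esig s si (Eiter s si n u)).
  destruct (Esig_Xplus_decreasing _ IH_X) as [H_X [Hx Hy]]. split; [exact H_X | lra].
Qed.

Lemma hs_Xplus u : inXplus u -> inXplus (hs s si u).
Proof.
  destruct u as [x y]; unfold inXplus, hs; simpl; intros [x_pos y_nonneg].
  pose proof (si_nonneg y ltac:(lra)); lra.
Qed.

Lemma vs_Xplus u : inXplus u -> inXplus (vs s si u).
Proof.
  destruct u as [x y]; unfold inXplus, vs; simpl; intros [x_pos y_nonneg].
  pose proof (s_pos x x_pos); lra.
Qed.

Lemma Esig_hs u : inXplus u -> Esig s si (hs s si u) = u.
Proof.
  intro u_X. rewrite Esig_Xplus by (apply hs_Xplus, u_X).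
  pose proof (is_hstepP (hs s si u)) as Hb.
  destruct u as [x y], u_X as [x_pos y_nonneg]; unfold hs in *; simpl in *.
  destruct (is_hstep (x + si y, y)).
  - unfold inv_step, hs_inv; simpl. f_equal; ring.
  - rewrite <- (s_si y) in Hb at 2. pose proof (s_inc (si y) (x + si y) ltac:(lra)); lra.
Qed.

Lemma Esig_vs u : inXplus u -> Esig s si (vs s si u) = u.
Proof.
  intro u_X. rewrite Esig_Xplus by (apply vs_Xplus, u_X).
  pose proof (is_hstepP (vs s si u)) as Hb.
  destruct u as [x y], u_X as [x_pos y_nonneg]; unfold vs in *; simpl in *.
  destruct (is_hstep (x, s x + y)).
  - lra.
  - unfold inv_step, vs_inv; simpl. f_equal; ring.
Qed.

Notation word := (word_apply (hs s si) (vs s si)).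

Lemma word_Xplus w u : inXplus u -> inXplus (word w u).
Proof.
  intro u_X. induction w as [|[|] w IH]; simpl;
    [exact u_X | apply hs_Xplus, IH | apply vs_Xplus, IH].
Qed.

Lemma Eiter_word w u : inXplus u -> Eiter s si (length w) (word w u) = u.
Proof.
  intro u_X. induction w as [|b w IH]; [reflexivity|].
  unfold Eiter; simpl length; rewrite Nat.iter_succ_r; fold (Eiter s si (length w)).
  simpl word_apply. destruct b; [rewrite Esig_hs | rewrite Esig_vs];
    solve [exact IH | apply word_Xplus, u_X].
Qed.

Lemma word_app w1 w2 u : word (w1 ++ w2) u = word w1 (word w2 u).
Proof. induction w1 as [|b w1 IH]; simpl; [reflexivity | rewrite IH; reflexivity]. Qed.

Lemma word_repeat_hs n u : word (repeat true n) u = (fst u + INR n * si (snd u), snd u).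
Proof.
  induction n as [|n IH]; simpl repeat; simpl word_apply.
  - destruct u; simpl; f_equal; ring.
  - rewrite IH, S_INR. unfold hs; simpl; f_equal; ring.
Qed.

Definition unword (bs : list bool) (u : pt) : pt := fold_left (fun v b => inv_step b v) bs u.

Lemma word_unword bs u : word bs (unword bs u) = u.
Proof.
  revert u; induction bs as [|b bs IH]; intro u; [reflexivity|].
  simpl word_apply; unfold unword; simpl fold_left; fold (unword bs (inv_step b u)).
  rewrite IH. destruct u as [x y], b; unfold inv_step, hs, vs, hs_inv, vs_inv; simpl; f_equal; ring.
Qed.

Definition branches (u : pt) (k : nat) : list bool :=
  map (fun i => is_hstep (Eiter s si i u)) (seq 0 k).

Lemma branches_S u k : branches u (S k) = branches u k ++ is_hstep (Eiter s si k u) :: nil.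
Proof. unfold branches. rewrite seq_S, map_app. reflexivity. Qed.

Lemma Eiter_unword u k : inXplus u -> Eiter s si k u = unword (branches u k) u.
Proof.
  intro u_X. induction k as [|k IH]; [reflexivity|].
  change (Eiter s si (S k) u) with (Esig s si (Eiter s si k u)).
  rewrite Esig_Xplus by apply (Eiter_Xplus_decreasing k u u_X).
  rewrite branches_S; unfold unword; rewrite fold_left_app; fold (unword (branches u k) u).
  rewrite <- IH. reflexivity.
Qed.

Definition northwest (u v : pt) : Prop := fst u <= fst v /\ snd v <= snd u.

Lemma unword_northwest bs u v : northwest u v -> northwest (unword bs u) (unword bs v).
Proof.
  revert u v; induction bs as [|b bs IH]; intros [x y] [x' y'] [Hx Hy]; [split; assumption|].
  simpl in Hx, Hy. apply IH. destruct b; unfold inv_step, hs_inv, vs_inv, northwest; simpl.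
  - pose proof (strictly_increasing_le si y' y si_inc Hy); lra.
  - pose proof (strictly_increasing_le s x x' s_inc Hx); lra.
Qed.

Lemma plane_continuous_word w : plane_continuous (word w).
Proof.
  induction w as [|[|] w IH]; simpl.
  - exact plane_continuous_id.
  - exact (plane_continuous_comp _ _ (plane_continuous_hshear si si_cont) IH).
  - exact (plane_continuous_comp _ _ (plane_continuous_vshear s s_cont) IH).
Qed.

Lemma path_continuous_unword bs gamma :
  path_continuous gamma -> path_continuous (fun l => unword bs (gamma l)).
Proof.
  revert gamma; induction bs as [|b bs IH]; intros gamma [fst_cont snd_cont]; [split; assumption|].
  apply (IH (fun l => inv_step b (gamma l))).
  destruct b; unfold inv_step, hs_inv, vs_inv; split; simpl; try assumption.
  - exact (continuity_minus _ _ fst_cont (continuity_comp _ _ snd_cont si_cont)).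
  - exact (continuity_minus _ _ snd_cont (continuity_comp _ _ fst_cont s_cont)).
Qed.

Section Divergence.
Variables (w1 w2 : pt) (h : R).
Hypothesis w1_Xplus : inXplus w1.
Hypothesis w2_Xplus : inXplus w2.
Hypothesis h_pos : 0 < h.
Hypothesis w1_left : fst w1 + h <= fst w2.
Hypothesis w1_above : snd w2 + h <= snd w1.

Local Notation u j := (Eiter s si j w1).
Local Notation u' j := (Eiter s si j w2).

(* A common step h^-1 widens the horizontal gap by si(y) - si(y') >= si(y' + h) - si(y'),
   a common step v^-1 the vertical one by s(x') - s(x) >= s(x + h) - s(x). *)
Lemma common_branches_widen_gaps : exists c, 0 < c /\ forall j,
  branches w1 j = branches w2 j ->
  fst (u j) + h <= fst (u' j) /\ snd (u' j) + h <= snd (u j) /\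
  2 * h + c * INR j <= gap_sum (u j) (u' j).
Proof.
  destruct (uniform_increment si h (snd w2) si_cont si_inc h_pos) as [cA [cA_pos HA]].
  destruct (uniform_increment s h (fst w1) s_cont s_inc h_pos) as [cB [cB_pos HB]].
  pose proof (Rmin_l cA cB); pose proof (Rmin_r cA cB); set (c := Rmin cA cB) in *.
  exists c; split; [apply Rmin_pos; assumption|].
  induction j as [|j IH]; intro same; [unfold gap_sum; simpl; rewrite Rmult_0_r; lra|].
  rewrite !branches_S in same. apply app_inj_tail in same as [same same_step].
  destruct (IH same) as [Hx [Hy Hsum]]; clear IH.
  destruct (Eiter_Xplus_decreasing j w1 w1_Xplus) as [u_X [u_x _]].
  destruct (Eiter_Xplus_decreasing j w2 w2_Xplus) as [u'_X [_ u'_y]].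
  change (u (S j)) with (Esig s si (u j)); change (u' (S j)) with (Esig s si (u' j)).
  rewrite (Esig_Xplus _ u_X), (Esig_Xplus _ u'_X), <- same_step.
  destruct u_X as [x_pos y_nonneg], u'_X as [x'_pos y'_nonneg].
  unfold gap_sum in *; rewrite S_INR, Rmult_plus_distr_l, Rmult_1_r.
  destruct (is_hstep (u j)); unfold inv_step, hs_inv, vs_inv; simpl.
  - pose proof (HA (snd (u' j)) ltac:(lra)).
    pose proof (strictly_increasing_le si (snd (u' j) + h) (snd (u j)) si_inc Hy); lra.
  - pose proof (HB (fst (u j)) ltac:(lra)).
    pose proof (strictly_increasing_le s (fst (u j) + h) (fst (u' j)) s_inc Hx); lra.
Qed.

Lemma branches_split : exists J, branches w1 J = branches w2 J /\
  is_hstep (u J) = false /\ is_hstep (u' J) = true.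
Proof.
  destruct common_branches_widen_gaps as [c [c_pos Hgap]].
  assert (split : exists J, branches w1 J = branches w2 J /\
                            branches w1 (S J) <> branches w2 (S J)).
  { apply NNPP; intro never.
    assert (always : forall J, branches w1 J = branches w2 J).
    { induction J as [|J IH]; [reflexivity|].
      apply NNPP; intro; apply never; exists J; split; assumption. }
    destruct (INR_unbounded ((fst w2 + snd w1) / c)) as [J HJ].
    apply (Rmult_lt_compat_r c) in HJ; [|exact c_pos].
    unfold Rdiv in HJ; rewrite Rmult_assoc, Rinv_l in HJ by lra.
    destruct (Hgap J (always J)) as [_ [_ Hsum]].
    destruct (Eiter_Xplus_decreasing J w1 w1_Xplus) as [[x_pos _] [_ y_le]].
    destruct (Eiter_Xplus_decreasing J w2 w2_Xplus) as [[_ y'_nonneg] [x'_le _]].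
    unfold gap_sum in Hsum; lra. }
  destruct split as [J [same differ]].
  exists J; split; [exact same|].
  rewrite !branches_S, same in differ.
  destruct (Hgap J same) as [Hx [Hy _]].
  pose proof (is_hstepP (u J)); pose proof (is_hstepP (u' J)).
  pose proof (strictly_increasing_le s (fst (u J)) (fst (u' J)) s_inc ltac:(lra)).
  destruct (is_hstep (u J)), (is_hstep (u' J));
    solve [split; reflexivity | exfalso; apply differ; reflexivity | lra].
Qed.

(* At the split, the common inverse branch word sends w1 above the graph of s and w2 below it;
   a point of the segment sent onto the graph, i.e. to v(t, 0), is the image of (t, 0) by a word. *)
Lemma segment_meets_word_of_axis : exists w t l,
  0 < t /\ 0 <= l <= 1 /\ word w (t, 0) = segment w1 w2 l.
Proof.
  destruct branches_split as [J [same [v_branch h_branch]]].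
  set (F := unword (branches w1 J)).
  assert (F_w1 : F w1 = u J) by (symmetry; apply Eiter_unword, w1_Xplus).
  assert (F_w2 : F w2 = u' J) by (unfold F; rewrite same; symmetry; apply Eiter_unword, w2_Xplus).
  pose proof (is_hstepP (u J)) as above; rewrite v_branch in above.
  pose proof (is_hstepP (u' J)) as below; rewrite h_branch in below.
  set (phi l := snd (F (segment w1 w2 l)) - s (fst (F (segment w1 w2 l)))).
  assert (phi_cont : continuity phi).
  { destruct (path_continuous_unword (branches w1 J) _ (path_continuous_segment w1 w2))
      as [Cx Cy].
    exact (continuity_minus _ _ Cy (continuity_comp _ _ Cx s_cont)). }
  assert (segment0 : segment w1 w2 0 = w1) by (destruct w1, w2; unfold segment; simpl; f_equal; ring).
  assert (segment1 : segment w1 w2 1 = w2) by (destruct w1, w2; unfold segment; simpl; f_equal; ring).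
  destruct (IVT_cor phi 0 1 phi_cont ltac:(lra)) as [l [l_range phi_l]].
  { unfold phi; rewrite segment0, segment1, F_w1, F_w2; nra. }
  set (c := F (segment w1 w2 l)) in phi_l.
  assert (c_right : fst (u J) <= fst c).
  { rewrite <- F_w1. apply unword_northwest. unfold northwest, segment; simpl; split; nra. }
  destruct (Eiter_Xplus_decreasing J w1 w1_Xplus) as [[x_pos _] _].
  exists (branches w1 J ++ false :: nil), (fst c), l.
  split; [lra|]; split; [exact l_range|].
  rewrite word_app; simpl word_apply.
  replace (vs s si (fst c, 0)) with c by (unfold phi in phi_l; fold c in phi_l;
    destruct c as [x y]; unfold vs; simpl in *; f_equal; lra).
  apply word_unword.
Qed.

End Divergence.

Section IrrationalOrbit.
Variable p : pt.
Hypothesis p_Xplus : inXplus p.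
Hypothesis p_irrational : sigma_irrational s si p.

Lemma orbit_snd_pos k : 0 < snd (Eiter s si k p).
Proof.
  destruct (Eiter_Xplus_decreasing k p p_Xplus) as [[_ [y_pos | y_zero]] _]; [exact y_pos|].
  exfalso; apply p_irrational; right; right; left.
  exists (branches p k), (Eiter s si k p); split; [exact y_zero|].
  rewrite (Eiter_unword p k p_Xplus), word_unword; reflexivity.
Qed.

Lemma orbit_eventually_small d : 0 < d ->
  exists k, fst (Eiter s si k p) < d /\ snd (Eiter s si k p) < d.
Proof.
  intro d_pos.
  set (x k := fst (Eiter s si k p)); set (y k := snd (Eiter s si k p)).
  assert (x_pos : forall k, 0 < x k) by (intro k; apply (Eiter_Xplus_decreasing k p p_Xplus)).
  assert (orbit_step : forall k,
    (x (S k) = x k - si (y k) /\ y (S k) = y k) \/ (x (S k) = x k /\ y (S k) = y k - s (x k))).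
  { intro k; unfold x, y. change (Eiter s si (S k) p) with (Esig s si (Eiter s si k p)).
    rewrite Esig_Xplus by apply (Eiter_Xplus_decreasing k p p_Xplus).
    destruct (is_hstep _); [left | right]; split; reflexivity. }
  destruct (euclid_fst_eventually_below s si x y s_inc s_pos si_pos x_pos orbit_snd_pos
              orbit_step d d_pos) as [Nx Hx].
  destruct (euclid_fst_eventually_below si s y x si_inc si_pos s_pos orbit_snd_pos x_pos
              ltac:(intro k; destruct (orbit_step k) as [[] | []]; [right | left]; split; assumption)
              d d_pos) as [Ny Hy].
  exists (Nat.max Nx Ny); split; [apply Hx | apply Hy]; lia.
Qed.

(* (t, 0) is approached by h^n(z) for an orbit point z near the origin: h moves z
   horizontally by the small step si(snd z). *)
Lemma backward_orbit_near_word_of_axis w t e : 0 < t -> 0 < e ->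
  exists r, backward_orbit_set s si p r /\ inXplus r /\
    Rabs (fst r - fst (word w (t, 0))) < e /\ Rabs (snd r - snd (word w (t, 0))) < e.
Proof.
  intros t_pos e_pos.
  destruct (plane_continuous_word w (t, 0) e e_pos) as [d [d_pos Hd]].
  destruct (continuity_eps_delta si 0 d si_cont d_pos) as [d' [d'_pos Hsi]].
  pose proof (Rmin_l t (Rmin d d')); pose proof (Rmin_r t (Rmin d d')).
  pose proof (Rmin_l d d'); pose proof (Rmin_r d d').
  destruct (orbit_eventually_small (Rmin t (Rmin d d'))) as [k [zx zy]];
    [repeat apply Rmin_pos; assumption|].
  set (z := Eiter s si k p) in *.
  assert (z_X : inXplus z) by apply (Eiter_Xplus_decreasing k p p_Xplus).
  pose proof (orbit_snd_pos k) as y_pos; fold z in y_pos.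
  pose proof (si_pos _ y_pos) as si_y_pos.
  assert (si_y_small : si (snd z) < d).
  { specialize (Hsi (snd z)). rewrite si0, !Rminus_0_r, !Rabs_pos_eq in Hsi by lra. lra. }
  destruct (nat_multiple_bracket (t - fst z) (si (snd z)) ltac:(lra) si_y_pos) as [n Hn].
  exists (word (w ++ repeat true n) z); split; [|split].
  - exists (length (w ++ repeat true n)), k. apply Eiter_word, z_X.
  - apply word_Xplus, z_X.
  - rewrite word_app, word_repeat_hs. apply Hd; simpl.
    + rewrite Rabs_left1 by lra; lra.
    + rewrite Rminus_0_r, Rabs_pos_eq by lra; lra.
Qed.

Lemma backward_orbit_dense : dense_in_Xplus (backward_orbit_set s si p).
Proof.
  intros [q1 q2] [q1_pos q2_nonneg] eps eps_pos; simpl in *.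
  set (e := eps / 5); assert (e_pos : 0 < e) by (unfold e; lra).
  pose proof (Rmin_l e (q1 / 2)); pose proof (Rmin_r e (q1 / 2)).
  set (h := Rmin e (q1 / 2)) in *; assert (h_pos : 0 < h) by (apply Rmin_pos; lra).
  destruct (segment_meets_word_of_axis (q1 - h, q2 + e + h) (q1 + h, q2 + e - h) h)
    as [w [t [l [t_pos [l_range Hw]]]]]; try (unfold inXplus; simpl; lra).
  destruct (backward_orbit_near_word_of_axis w t e t_pos e_pos)
    as [r [r_orbit [r_X [Hx Hy]]]].
  exists r; split; [exact r_orbit|]; split; [exact r_X|].
  rewrite Hw in Hx, Hy; unfold segment in Hx, Hy; simpl in Hx, Hy.
  apply Rabs_def2 in Hx, Hy.
  eapply Rle_lt_trans; [apply dist2_le_abs_sum|]; simpl.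
  assert (Rabs (q1 - fst r) < 2 * e) by (apply Rabs_def1; nra).
  assert (Rabs (q2 - snd r) < 3 * e) by (apply Rabs_def1; nra).
  unfold e in *; lra.
Qed.

End IrrationalOrbit.

End GeneralizedEuclid.

Theorem proposition4 (s si : R -> R) (p : pt) :
  is_homeo s si -> strictly_increasing s -> odd_fun s ->
  inXplus p -> sigma_irrational s si p ->
  dense_in_Xplus (backward_orbit_set s si p).
Proof.
  intros [s_cont [si_cont [si_s s_si]]] s_inc s_odd p_Xplus p_irrational.
  assert (s0 : s 0 = 0) by (pose proof (s_odd 0) as H; rewrite Ropp_0 in H; lra).
  exact (backward_orbit_dense s si s_cont si_cont si_s s_si s_inc s0 p p_Xplus p_irrational).
Qed.
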